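(* Let $\mathcal F$ be a proper filter on $\omega$. The game $\mathfrak G(\mathcal F^+,[\omega]^{<\omega},\mathcal F^* )$ is dual to the game $\mathfrak G(\mathcal F,\omega,\mathcal F^+)$ (a player has a winning strategy in one iff the other player has one in the other). Consequently, in $\mathfrak G(\mathcal F^+,[\omega]^{<\omega},\mathcal F^* )$, player I has a winning strategy if and only if $\mathcal F$ is $\omega$-$+$-diagonalizable, and player II has a winning strategy if and only if $\mathcal F$ is not weakly Ramsey.
   Context: A filter on $\omega$ is a family $\mathcal F\subseteq\mathcal P(\omega)$ closed under finite intersections and supersets and containing all cofinite sets; it is proper if all its members are infinite. $\mathcal F^+=\{X:\omega\setminus X\notin\mathcal F\}$, $\mathcal F^*=\mathcal P(\omega)\setminus\mathcal F^+$. $X\subseteq^*Y$ means $X\setminus Y$ is finite. Game $\mathfrak G(\mathcal X,\omega,\mathcal Z)$: at each stage $k$, I chooses $X_k\in\mathcal X$ and II responds with $n_k\in X_k$; II wins if $\{n_k:k\in\omega\}\in\mathcal Z$. Game $\mathfrak G(\mathcal X,[\omega]^{<\omega},\mathcal Z)$: at each stage $k$, I chooses $X_k\in\mathcal X$ and II responds with a nonempty finite $s_k\subseteq X_k$; II wins if $\bigcup_k s_k\in\mathcal Z$. In each game I wins when II does not. A tree is a set $T$ of finite sequences of natural numbers containing the empty sequence and closed under initial segments; it is an $\mathcal F$-tree if for each $\bar s\in T$ there is $X_{\bar s}\in\mathcal F$ with $\bar s^\frown n\in T$ for all $n\in X_{\bar s}$; a branch (infinite sequence with all initial segments in $T$)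 is in $\mathcal F^+$ if its set of values is in $\mathcal F^+$. $\mathcal F$ is weakly Ramsey if every $\mathcal F$-tree has a branch in $\mathcal F^+$. $\mathcal F$ is $\omega$-$+$-diagonalizable if there are $X_n\in\mathcal F^+$ ($n\in\omega$) such that for every $Y\in\mathcal F$ there is $n$ with $X_n\subseteq^*Y$. *)

From Stdlib Require Import List Arith.
Import ListNotations.

Definition nset := nat -> Prop.
Definition family := nset -> Prop.

Definition compl (X : nset) : nset := fun n => ~ X n.
Definition cofinite (X : nset) : Prop := exists N, forall n, N <= n -> X n.
Definition infinite (X : nset) : Prop := forall N, exists n, N <= n /\ X n.

Definition is_filter (F : family) : Prop :=
  (forall X Y, F X -> F Y -> F (fun n => X n /\ Y n)) /\
  (forall X Y, F X -> (forall n, X n -> Y n) -> F Y) /\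
  (forall X, cofinite X -> F X).

Definition proper_filter (F : family) : Prop :=
  is_filter F /\ (forall X, F X -> infinite X).

Definition Fplus (F : family) : family := fun X => ~ F (compl X).
Definition Fstar (F : family) : family := fun X => ~ Fplus F X.

Definition subset_star (X Y : nset) : Prop :=
  exists N, forall n, X n -> ~ Y n -> n < N.

Definition prefix {A : Type} (f : nat -> A) (k : nat) : list A :=
  map f (seq 0 k).

(* A strategy for I maps the finite sequence of II's previous moves to I's
   next move; a strategy for II maps I's previous moves and I's current
   move to II's answer. *)
Definition I_wins_omega (Xf Z : family) : Prop :=
  exists sigma : list nat -> nset,
    (forall h, Xf (sigma h)) /\
    forall f : nat -> nat,
      (forall k, sigma (prefix f k) (f k)) ->
      ~ Z (fun n => exists k, f k = n).

Definition II_wins_omega (Xf Z : family) : Prop :=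
  exists tau : list nset -> nset -> nat,
    (forall h A, Forall Xf h -> Xf A -> A (tau h A)) /\
    forall A : nat -> nset,
      (forall k, Xf (A k)) ->
      Z (fun n => exists k, tau (prefix A k) (A k) = n).

(* finite sets are represented by lists; a legal move for II in answer
   to A is a nonempty list all of whose elements lie in A *)
Definition legal_fin (A : nset) (s : list nat) : Prop :=
  s <> [] /\ forall n, In n s -> A n.

Definition I_wins_fin (Xf Z : family) : Prop :=
  exists sigma : list (list nat) -> nset,
    (forall h, Xf (sigma h)) /\
    forall s : nat -> list nat,
      (forall k, legal_fin (sigma (prefix s k)) (s k)) ->
      ~ Z (fun n => exists k, In n (s k)).

Definition II_wins_fin (Xf Z : family) : Prop :=
  exists tau : list nset -> nset -> list nat,
    (forall h A, Forall Xf h -> Xf A -> legal_fin A (tau h A)) /\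
    forall A : nat -> nset,
      (forall k, Xf (A k)) ->
      Z (fun n => exists k, In n (tau (prefix A k) (A k))).

Definition is_tree (T : list nat -> Prop) : Prop :=
  T [] /\ forall s t, T (s ++ t) -> T s.

Definition is_F_tree (F : family) (T : list nat -> Prop) : Prop :=
  is_tree T /\
  forall s, T s -> exists X, F X /\ forall n, X n -> T (s ++ [n]).

Definition is_branch (T : list nat -> Prop) (b : nat -> nat) : Prop :=
  forall k, T (prefix b k).

Definition weakly_ramsey (F : family) : Prop :=
  forall T, is_F_tree F T ->
    exists b, is_branch T b /\ Fplus F (fun n => exists k, b k = n).

Definition omega_plus_diagonalizable (F : family) : Prop :=
  exists X : nat -> nset,
    (forall n, Fplus F (X n)) /\
    forall Y, F Y -> exists n, subset_star (X n) Y.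

(* Both games are won by simulating a winning strategy of the other game.  A
   strategy for I in one game is answered, round by round, by a point in the
   meet of I's set (in F, resp. F^+) with the opponent's set (in F^+, resp. F),
   and such points exist.  Conversely a strategy tau of II is turned into a
   strategy for I which plays the "shadow" of tau, the set of all answers tau
   could give; legality of tau makes the shadow positive, and every point of
   the shadow can be realized as an answer of tau.  Singletons and heads of
   finite moves translate between the two games.
   Having reduced everything to G(F, omega, F^+): a winning strategy of I is
   an F-tree all of whose branches lie outside F^+, and the shadows of a
   winning strategy of II, indexed by the countably many positions, form an
   omega-+-diagonalizing family; conversely II answers diagonalizing sets
   X_{g k} with g enumerating each index infinitely often. *)
From Stdlib Require Import List Arith Lia Classical ClassicalEpsilon Cantor.
Import ListNotations.

Definition eps {A : Type} (a : A) (P : A -> Prop) : A := epsilon (inhabits a) P.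

Lemma eps_spec {A : Type} (a : A) (P : A -> Prop) : (exists x, P x) -> P (eps a P).
Proof. intros. unfold eps. now apply epsilon_spec. Qed.

Definition range (f : nat -> nat) : nset := fun n => exists k, f k = n.

Lemma prefix_S {A : Type} (f : nat -> A) k : prefix f (S k) = prefix f k ++ [f k].
Proof. unfold prefix. now rewrite seq_S, map_app. Qed.

Lemma prefix_length {A : Type} (f : nat -> A) k : length (prefix f k) = k.
Proof. unfold prefix. now rewrite length_map, length_seq. Qed.

Lemma map_prefix {A B : Type} (g : A -> B) (f : nat -> A) k :
  map g (prefix f k) = prefix (fun j => g (f j)) k.
Proof. unfold prefix. now rewrite map_map. Qed.

Lemma history_recursion {A : Type} (next : list A -> A) :
  exists f : nat -> A, forall k, f k = next (prefix f k).
Proof.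
  set (hist := fix hist k := match k with 0 => [] | S k => hist k ++ [next (hist k)] end).
  assert (Hhist : forall k, hist k = prefix (fun j => next (hist j)) k).
  { induction k as [|k IH]; [reflexivity|]. now rewrite prefix_S, <- IH. }
  exists (fun j => next (hist j)). intro k. now rewrite <- Hhist.
Qed.

(* [run step os] reconstructs a player's own moves from the opponent's moves [os]. *)
Definition run {O M : Type} (step : list M -> O -> M) (os : list O) : list M :=
  fold_left (fun acc o => acc ++ [step acc o]) os [].

Lemma run_snoc {O M : Type} (step : list M -> O -> M) os o :
  run step (os ++ [o]) = run step os ++ [step (run step os) o].
Proof. unfold run. now rewrite fold_left_app. Qed.

Lemma run_prefix {O M : Type} (step : list M -> O -> M) (a : nat -> O) k :
  run step (prefix a k) = prefix (fun j => step (run step (prefix a j)) (a j)) k.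
Proof.
  induction k as [|k IH]; [reflexivity|].
  now rewrite !prefix_S, run_snoc, IH.
Qed.

Lemma run_Forall {O M : Type} (step : list M -> O -> M) (P : M -> Prop) :
  (forall acc o, P (step acc o)) -> forall os, Forall P (run step os).
Proof.
  intros H os. induction os as [|o os IH] using rev_ind; [constructor|].
  rewrite run_snoc. apply Forall_app. auto.
Qed.

Section FilterFacts.
Variable F : family.
Hypothesis HF : is_filter F.

Lemma filter_full : F (fun _ => True).
Proof. destruct HF as [_ [_ Hc]]. apply Hc. exists 0. auto. Qed.

Lemma Fplus_mono X Y : Fplus F X -> (forall n, X n -> Y n) -> Fplus F Y.
Proof.
  destruct HF as [_ [Hs _]]. intros HX Hxy HY. apply HX.
  apply (Hs _ _ HY). intros n HnY HXn. exact (HnY (Hxy n HXn)).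
Qed.

Lemma not_Fplus_compl X : ~ Fplus F (compl X) -> F X.
Proof.
  destruct HF as [_ [Hs _]]. intro H. apply NNPP in H.
  apply (Hs _ _ H). intros n Hn. now apply NNPP.
Qed.

Lemma filter_meet_Fplus A X L :
  F A -> Fplus F X -> exists n, L <= n /\ A n /\ X n.
Proof.
  destruct HF as [Hi [Hs Hc]]. intros HA HX. apply NNPP. intro Hn. apply HX.
  apply (Hs (fun n => A n /\ L <= n)).
  - apply Hi; [exact HA|]. apply Hc. now exists L.
  - intros n [HAn HLn] HXn. apply Hn. now exists n.
Qed.

End FilterFacts.

Lemma Fplus_full F : proper_filter F -> Fplus F (fun _ => True).
Proof. intros [_ Hinf] H. destruct (Hinf _ H 0) as [n [_ Hn]]. exact (Hn I). Qed.

(* [sigma] is a strategy of I in a game whose positions are lists of [M]-moves;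
   the answer [n] of [counter] is recorded in such a position as [enc n]. *)
Section Counter.
Variables (M : Type) (enc : nat -> M) (sigma : list M -> nset) (Opp : family).
Hypothesis sigma_meets : forall p A, Opp A -> exists n, A n /\ sigma p n.

Definition counter_pick (p : list M) (A : nset) : nat :=
  eps 0 (fun n => A n /\ sigma p n).

Lemma counter_pick_spec p A : Opp A -> A (counter_pick p A) /\ sigma p (counter_pick p A).
Proof. intro HA. apply (eps_spec 0 (fun n => A n /\ sigma p n)), sigma_meets, HA. Qed.

Definition counter (hs : list nset) (A : nset) : nat :=
  counter_pick (run (fun p A => enc (counter_pick p A)) hs) A.

Lemma counter_legal hs A : Opp A -> A (counter hs A).
Proof. intro HA. apply (counter_pick_spec _ _ HA). Qed.

Lemma counter_follows (A : nat -> nset) : (forall k, Opp (A k)) ->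
  forall k, sigma (prefix (fun j => enc (counter (prefix A j) (A j))) k)
                  (counter (prefix A k) (A k)).
Proof.
  intros HA k. unfold counter at 2. rewrite run_prefix. exact (proj2 (counter_pick_spec _ _ (HA k))).
Qed.

End Counter.

Arguments counter {M}.
Arguments counter_legal {M}.
Arguments counter_follows {M}.

(* II's answers in [Ans] are read as sets of points through [hits]. *)
Section Shadow.
Variables (Xf : family) (Ans : Type) (hits : Ans -> nat -> Prop).
Variables (tau : list nset -> nset -> Ans) (X0 : nset).
Hypothesis HX0 : Xf X0.

Definition shadow_move (p : list nset) (n : nat) : nset :=
  eps X0 (fun A => Xf A /\ ((exists B, Xf B /\ hits (tau p B) n) -> hits (tau p A) n)).

Lemma shadow_move_spec p n : Xf (shadow_move p n) /\
  ((exists B, Xf B /\ hits (tau p B) n) -> hits (tau p (shadow_move p n)) n).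
Proof.
  unfold shadow_move. apply eps_spec. destruct (classic (exists B, Xf B /\ hits (tau p B) n)) as [[B HB]|Hn].
  - exists B. tauto.
  - exists X0. tauto.
Qed.

Definition shadow (h : list nat) : nset :=
  fun n => exists A, Xf A /\ hits (tau (run shadow_move h) A) n.

Lemma shadow_play (f : nat -> nat) : (forall k, shadow (prefix f k) (f k)) ->
  exists A : nat -> nset, (forall k, Xf (A k)) /\
    forall k, hits (tau (prefix A k) (A k)) (f k).
Proof.
  intro Hf. exists (fun j => shadow_move (run shadow_move (prefix f j)) (f j)).
  split; [intro; apply shadow_move_spec|].
  intro k. rewrite <- run_prefix. apply shadow_move_spec, Hf.
Qed.

Hypothesis tau_legal : forall p A, Forall Xf p -> Xf A ->
  exists n, hits (tau p A) n /\ forall m, hits (tau p A) m -> A m.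

Lemma shadow_not_compl h : ~ Xf (compl (shadow h)).
Proof.
  intro Hc.
  assert (Hp : Forall Xf (run shadow_move h)).
  { apply run_Forall. intros. apply shadow_move_spec. }
  destruct (tau_legal _ _ Hp Hc) as [n [Hn Hin]].
  apply (Hin n Hn). now exists (compl (shadow h)).
Qed.

End Shadow.

Arguments shadow Xf {Ans}.
Arguments shadow_play Xf {Ans}.
Arguments shadow_not_compl Xf {Ans}.

Section Duality.
Variable F : family.
Hypothesis HPF : proper_filter F.
Let HF : is_filter F := proj1 HPF.

Lemma omega_I_fin_II : I_wins_omega F (Fplus F) -> II_wins_fin (Fplus F) (Fstar F).
Proof.
  intros [sigma [Hs Hwin]].
  assert (Hmeet : forall p A, Fplus F A -> exists n, A n /\ sigma p n).
  { intros p A HA. destruct (filter_meet_Fplus F HF _ _ 0 (Hs p) HA) as [n Hn].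
    exists n. tauto. }
  exists (fun hs A => [counter id sigma hs A]). split.
  - intros h A _ HA. split; [discriminate|].
    intros n [<- | []]. exact (counter_legal _ _ _ Hmeet _ _ HA).
  - intros A HA Hplus. apply (Hwin _ (counter_follows id _ _ Hmeet A HA)).
    apply (Fplus_mono F HF _ _ Hplus). intros n [k [Hk | []]]. now exists k.
Qed.

Lemma fin_I_omega_II : I_wins_fin (Fplus F) (Fstar F) -> II_wins_omega F (Fplus F).
Proof.
  intros [sigma [Hs Hwin]].
  assert (Hmeet : forall p A, F A -> exists n, A n /\ sigma p n).
  { intros p A HA. destruct (filter_meet_Fplus F HF _ _ 0 HA (Hs p)) as [n Hn].
    exists n. tauto. }
  set (enc := fun n : nat => [n]).
  exists (counter enc sigma). split.
  - intros h A _ HA. exact (counter_legal _ _ _ Hmeet _ _ HA).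
  - intros A HA. apply NNPP. intro Hnot.
    apply (Hwin (fun j => enc (counter enc sigma (prefix A j) (A j)))).
    + intro k. split; [discriminate|].
      intros n [<- | []]. exact (counter_follows _ _ _ Hmeet A HA k).
    + intro Hplus. apply Hnot. apply (Fplus_mono F HF _ _ Hplus).
      intros n [k [Hk | []]]. now exists k.
Qed.

Lemma omega_II_shadow : II_wins_omega F (Fplus F) ->
  exists S : list nat -> nset, (forall h, Fplus F (S h)) /\
    forall f, (forall k, S (prefix f k) (f k)) -> Fplus F (range f).
Proof.
  intros [tau [Hleg Hwin]].
  set (hits := fun m n : nat => m = n).
  exists (shadow F hits tau (fun _ => True)). split.
  - intros h. apply (shadow_not_compl F hits tau _ (filter_full F HF)).
    intros p A Hp HA. exists (tau p A). split; [reflexivity|].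
    intros m <-. now apply Hleg.
  - intros f Hf.
    destruct (shadow_play F hits tau _ (filter_full F HF) f Hf) as [A [HA Hhit]].
    apply (Fplus_mono F HF _ _ (Hwin A HA)).
    intros n [k <-]. exists k. exact (eq_sym (Hhit k)).
Qed.

Lemma omega_II_fin_I : II_wins_omega F (Fplus F) -> I_wins_fin (Fplus F) (Fstar F).
Proof.
  intros Hwin. destruct (omega_II_shadow Hwin) as [S [HS HSwin]].
  exists (fun h => S (map (hd 0) h)). split; [intro; apply HS|].
  intros s Hs Hnot.
  assert (Hhd : forall k, In (hd 0 (s k)) (s k)).
  { intro k. destruct (Hs k) as [Hne _]. destruct (s k); [congruence | now left]. }
  assert (Hfollow : forall k, S (prefix (fun j => hd 0 (s j)) k) (hd 0 (s k))).
  { intro k. rewrite <- map_prefix. apply (proj2 (Hs k)), Hhd. }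
  apply Hnot, (Fplus_mono F HF _ _ (HSwin _ Hfollow)).
  intros n [k <-]. exists k. apply Hhd.
Qed.

Lemma fin_II_omega_I : II_wins_fin (Fplus F) (Fstar F) -> I_wins_omega F (Fplus F).
Proof.
  intros [tau [Hleg Hwin]].
  set (hits := fun (s : list nat) n => In n s).
  set (S := shadow (Fplus F) hits tau (fun _ => True)).
  exists S. split.
  - intro h. apply (not_Fplus_compl F HF).
    apply (shadow_not_compl (Fplus F) hits tau _ (Fplus_full F HPF)).
    intros p A Hp HA. destruct (Hleg p A Hp HA) as [Hne Hin].
    destruct (tau p A) as [|n l]; [congruence|]. exists n. split; [now left | exact Hin].
  - intros f Hf Hplus.
    destruct (shadow_play _ hits tau _ (Fplus_full F HPF) f Hf) as [A [HA Hhit]].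
    apply (Hwin A HA). apply (Fplus_mono F HF _ _ Hplus).
    intros n [k <-]. exists k. apply Hhit.
Qed.

End Duality.

Lemma firstn_app_le {A : Type} k (s t : list A) :
  k <= length s -> firstn k (s ++ t) = firstn k s.
Proof.
  intro H. rewrite firstn_app. replace (k - length s) with 0 by lia. apply app_nil_r.
Qed.

Definition follows (sigma : list nat -> nset) (s : list nat) : Prop :=
  forall k, k < length s -> sigma (firstn k s) (nth k s 0).

Lemma follows_F_tree F sigma : (forall h, F (sigma h)) -> is_F_tree F (follows sigma).
Proof.
  intros Hs. split; [split|].
  - intros k Hk. simpl in Hk. lia.
  - intros s t H k Hk. specialize (H k).
    rewrite length_app, firstn_app_le, app_nth1 in H by lia. apply H. lia.
  - intros s Hsk. exists (sigma s). split; [apply Hs|]. intros n Hn k Hk.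
    rewrite length_app in Hk. simpl in Hk.
    destruct (Nat.lt_ge_cases k (length s)).
    + rewrite firstn_app_le, app_nth1 by lia. auto.
    + replace k with (length s) by lia.
      rewrite firstn_app_le, firstn_all, app_nth2, Nat.sub_diag by lia. exact Hn.
Qed.

Lemma follows_branch sigma b : is_branch (follows sigma) b ->
  forall k, sigma (prefix b k) (b k).
Proof.
  intros Hb k. specialize (Hb (S k) k).
  rewrite prefix_length, prefix_S, firstn_app_le, firstn_all2, app_nth2 in Hb
    by (rewrite prefix_length; lia).
  rewrite prefix_length, Nat.sub_diag in Hb. apply Hb. lia.
Qed.

Lemma omega_I_iff_not_weakly_ramsey F : is_filter F ->
  (I_wins_omega F (Fplus F) <-> ~ weakly_ramsey F).
Proof.
  intros HF. split.
  - intros [sigma [Hs Hwin]] HWR.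
    destruct (HWR _ (follows_F_tree F sigma Hs)) as [b [Hb Hplus]].
    exact (Hwin b (follows_branch sigma b Hb) Hplus).
  - intro HnWR. apply not_all_ex_not in HnWR as [T HT].
    apply imply_to_and in HT as [[[Hroot _] Hsucc] Hno].
    set (sigma := fun s => eps (fun _ => True)
       (fun X => F X /\ (T s -> forall n, X n -> T (s ++ [n])))).
    assert (Hsig : forall s, F (sigma s) /\ (T s -> forall n, sigma s n -> T (s ++ [n]))).
    { intro s. apply eps_spec. destruct (classic (T s)) as [Ht | Ht].
      - destruct (Hsucc s Ht) as [X HX]. now exists X.
      - exists (fun _ => True). split; [exact (filter_full F HF) | tauto]. }
    exists sigma. split; [intro; apply Hsig|].
    intros f Hf Hplus. apply Hno. exists f. split; [|exact Hplus].
    intro k. induction k as [|k IH]; [exact Hroot|].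
    rewrite prefix_S. now apply Hsig.
Qed.

Fixpoint decode_list (l c : nat) : list nat :=
  match l with
  | 0 => []
  | S l => let (a, c') := Cantor.of_nat c in a :: decode_list l c'
  end.

Definition decode (n : nat) : list nat := let (l, c) := Cantor.of_nat n in decode_list l c.

Lemma decode_surj s : exists n, decode n = s.
Proof.
  assert (H : exists c, decode_list (length s) c = s).
  { induction s as [|a s [c Hc]]; [now exists 0|].
    exists (Cantor.to_nat (a, c)). cbn [length decode_list].
    rewrite Cantor.cancel_of_to. congruence. }
  destruct H as [c Hc]. exists (Cantor.to_nat (length s, c)).
  unfold decode. now rewrite Cantor.cancel_of_to.
Qed.

Lemma sqrt_remainder_hits n N : exists k, N <= k /\ k - Nat.sqrt k * Nat.sqrt k = n.
Proof.
  exists ((n + N) * (n + N) + n).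
  rewrite (Nat.sqrt_unique _ (n + N)) by nia. nia.
Qed.

Lemma omega_II_diagonalizable F : proper_filter F ->
  II_wins_omega F (Fplus F) -> omega_plus_diagonalizable F.
Proof.
  intros HPF Hwin. destruct (omega_II_shadow F HPF Hwin) as [S [HS HSwin]].
  exists (fun n => S (decode n)). split; [intro; apply HS|].
  intros Y HY. apply NNPP. intro Hnot.
  assert (Hout : forall h, exists n, S h n /\ ~ Y n).
  { intro h. destruct (decode_surj h) as [m <-]. apply NNPP. intro H.
    apply Hnot. exists m, 0. intros x Hx HYx. exfalso. apply H. now exists x. }
  destruct (history_recursion (fun h => eps 0 (fun n => S h n /\ ~ Y n))) as [f Hf].
  assert (Hfk : forall k, S (prefix f k) (f k) /\ ~ Y (f k)).
  { intro k. rewrite Hf. apply eps_spec, Hout. }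
  apply (HSwin f (fun k => proj1 (Hfk k))).
  destruct HPF as [[_ [Hs _]] _]. apply (Hs _ _ HY).
  intros n HYn [k <-]. exact (proj2 (Hfk k) HYn).
Qed.

Lemma diagonalizable_omega_II F : is_filter F ->
  omega_plus_diagonalizable F -> II_wins_omega F (Fplus F).
Proof.
  intros HF [X [HX Hdiag]].
  set (g := fun k => k - Nat.sqrt k * Nat.sqrt k).
  set (P := fun k (A : nset) m => k <= m /\ A m /\ X (g k) m).
  assert (HP : forall k A, F A -> P k A (eps 0 (P k A))).
  { intros k A HA. apply eps_spec, (filter_meet_Fplus F HF _ _ _ HA (HX _)). }
  exists (fun h A => eps 0 (P (length h) A)). split.
  - intros h A _ HA. apply (HP _ _ HA).
  - intros A HA Hc.
    destruct (Hdiag _ Hc) as [n [N HN]].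
    destruct (sqrt_remainder_hits n N) as [k [Hk Hg]].
    set (p := eps 0 (P (length (prefix A k)) (A k))).
    destruct (HP (length (prefix A k)) (A k) (HA k)) as [Hge [_ HXp]]. fold p in Hge, HXp.
    rewrite prefix_length in Hge, HXp. unfold g in HXp. rewrite Hg in HXp.
    assert (Hlt : p < N) by (apply HN; [exact HXp | intro H; apply H; now exists k]).
    lia.
Qed.

Theorem theorem2p22 (F : family) (HF : proper_filter F) :
  (I_wins_fin (Fplus F) (Fstar F) <-> II_wins_omega F (Fplus F)) /\
  (II_wins_fin (Fplus F) (Fstar F) <-> I_wins_omega F (Fplus F)) /\
  (I_wins_fin (Fplus F) (Fstar F) <-> omega_plus_diagonalizable F) /\
  (II_wins_fin (Fplus F) (Fstar F) <-> ~ weakly_ramsey F).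
Proof.
  assert (HI : I_wins_fin (Fplus F) (Fstar F) <-> II_wins_omega F (Fplus F)).
  { split; [apply fin_I_omega_II | apply omega_II_fin_I]; exact HF. }
  assert (HII : II_wins_fin (Fplus F) (Fstar F) <-> I_wins_omega F (Fplus F)).
  { split; [apply fin_II_omega_I | apply omega_I_fin_II]; exact HF. }
  split; [exact HI|]. split; [exact HII|]. split.
  - rewrite HI. split; [apply omega_II_diagonalizable | apply diagonalizable_omega_II];
      apply HF.
  - rewrite HII. apply omega_I_iff_not_weakly_ramsey, HF.
Qed.
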